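(* Let $n\ge2$, $N\ge2n+1$, $\alpha_2,\dots,\alpha_n$ real, $\alpha_1=1$. Consider the closed ($k=1$) $N$-dimensional metric $ds^2=-dt^2+a(t)^2\left(\frac{dr^2}{1-r^2}+r^2d\Omega_{N-2}^2\right)$ and the pressure component of the Lovelock field equations with $p=0$, namely $$-(N-2)\left(\frac{N-3}{2}\Big(\frac{\dot a^2}{a^2}+\frac{1}{a^2}\Big)+\frac{\ddot a}{a}\right)+\sum_{i=2}^{n}\alpha_i\left[{}^{(i)}k_{11}\Big(\frac{\dot a^2}{a^2}+\frac{1}{a^2}\Big)^i+{}^{(i)}k_{12}\,\frac{\ddot a}{a}\Big(\frac{\dot a^2}{a^2}+\frac{1}{a^2}\Big)^{i-1}\right]=0 .$$ Let $C_1>0$ be a positive real root of $2-N+\sum_{i=2}^n\alpha_i\,{}^{(i)}k_{12}\,\frac{C_1^{i-1}}{i}=0$. Then $$a(t)=\frac{1}{\sqrt{C_1}}\cosh\big(\sqrt{C_1}\,t\big)$$ is a solution of this pressure-free equation.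
   Context: Dots denote $d/dt$ ($t$ cosmic time). This equation is the spatial ($p$) component of the Lovelock field equations $\sum_i\alpha_i\,{}^{(i)}\mathcal{H}^a_{\ b}=T^a_{\ b}$ for a perfect fluid in the FRW metric. Coefficients (binomial coefficients $\binom{a}{b}$, zero when $b<0$): ${}^{(i)}k_{11}=-\tfrac12(2(i-1))!\,(N-2)(N-1-2i)\binom{N-3}{2(i-1)}$, ${}^{(i)}k_{12}=-\tfrac12(2(i-1))!\left[2(N-i-1)\binom{N-2}{2(i-1)}+(N-2)(N-1-2i)\binom{N-3}{2i-3}\right]$. *)

From Stdlib Require Import Reals Arith Factorial.
From Coquelicot Require Import Coquelicot.
Open Scope R_scope.

Fixpoint binom (a b : nat) : nat :=
  match a, b with
  | _, O => 1%nat
  | O, S _ => 0%nat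
  | S a', S b' => (binom a' b' + binom a' (S b'))%nat
  end.

Definition k11 (N i : nat) : R :=
  - / 2 * INR (fact (2 * (i - 1))) * (INR N - 2) * (INR N - 1 - 2 * INR i)
    * INR (binom (N - 3) (2 * (i - 1))).

(* (i)k_12 = -1/2 (2(i-1))! [2(N-i-1) C(N-2,2(i-1)) + (N-2)(N-1-2i) C(N-3,2i-3)]
   (used only for i >= 2, where 2i-3 >= 1, so nat subtraction is exact) *)
Definition k12 (N i : nat) : R :=
  - / 2 * INR (fact (2 * (i - 1))) *
    (2 * (INR N - INR i - 1) * INR (binom (N - 2) (2 * (i - 1)))
     + (INR N - 2) * (INR N - 1 - 2 * INR i) * INR (binom (N - 3) (2 * i - 3))).

(* Left-hand side of the pressure (p) component of the Lovelock equations,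
   k = 1, alpha_1 = 1, evaluated at time t. *)
Definition pressure_lhs (N n : nat) (alpha : nat -> R) (a : R -> R) (t : R) : R :=
  let ad := Derive a t in
  let add := Derive (Derive a) t in
  let H := ad ^ 2 / a t ^ 2 + 1 / a t ^ 2 in
  - (INR N - 2) * ((INR N - 3) / 2 * H + add / a t)
  + sum_n_m (fun i => alpha i * (k11 N i * H ^ i + k12 N i * (add / a t) * H ^ (i - 1)))
      2 n.

(* For a(t) = cosh(s t)/s one has a'(t) = sinh(s t) and a''(t) = s cosh(s t), so
   cosh^2 - sinh^2 = 1 makes both H = a'^2/a^2 + 1/a^2 and a''/a equal to s^2 = C1 at
   every t.  The pressure equation then reduces to -(N-2)(N-1)/2 C1 + C1 sum_i alpha_i
   (k11 + k12) C1^(i-1), and the binomial identity 2 i k11 = (N-1-2i) k12 (Pascal's rule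
   plus absorption) rewrites it as (N-1)/2 C1 times the polynomial of which C1 is a root. *)

From Stdlib Require Import Reals Lra Lia Psatz Factorial FunctionalExtensionality.
From Coquelicot Require Import Coquelicot.
Open Scope R_scope.

Lemma binom_succ_mul (a b : nat) :
  (S b * binom a (S b) = (a - b) * binom a b)%nat.
Proof.
  revert b; induction a as [|a IH]; intros b.
  - simpl. lia.
  - destruct b as [|b].
    + assert (B0 : binom a 0 = 1%nat) by (destruct a; reflexivity).
      specialize (IH 0%nat). rewrite B0 in IH.
      cbn [binom]. rewrite B0. lia.
    + cbn [binom].
      pose proof (IH b) as IHb. pose proof (IH (S b)) as IHSb.
      destruct (Nat.le_gt_cases (S b) a).
      * replace (S a - S b)%nat with (a - b)%nat by lia.
        replace (a - b)%nat with (S (a - S b)) in * by lia. nia.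
      * replace (a - b)%nat with 0%nat in IHb by lia.
        replace (a - S b)%nat with 0%nat in IHSb by lia.
        replace (S a - S b)%nat with 0%nat by lia. nia.
Qed.

Lemma k11_k12_relation (N i : nat) : (2 <= i)%nat -> (2 * i <= N)%nat ->
  2 * INR i * k11 N i = (INR N - 1 - 2 * INR i) * k12 N i.
Proof.
  intros Hi HN.
  assert (Hpascal : binom (N - 2) (2 * (i - 1)) =
     (binom (N - 3) (2 * i - 3) + binom (N - 3) (2 * (i - 1)))%nat).
  { replace (N - 2)%nat with (S (N - 3)) by lia.
    replace (2 * (i - 1))%nat with (S (2 * i - 3)) by lia. reflexivity. }
  assert (Habsorb : (S (2 * i - 3) * binom (N - 3) (2 * (i - 1)) =
                     (N - 2 * i) * binom (N - 3) (2 * i - 3))%nat).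
  { replace (2 * (i - 1))%nat with (S (2 * i - 3)) by lia.
    rewrite binom_succ_mul. f_equal. lia. }
  apply (f_equal INR) in Hpascal. apply (f_equal INR) in Habsorb.
  rewrite plus_INR in Hpascal.
  rewrite !mult_INR, minus_INR, mult_INR in Habsorb by lia.
  replace (INR (S (2 * i - 3))) with (2 * INR i - 2) in Habsorb
    by (rewrite S_INR, minus_INR, mult_INR by lia; simpl; lra).
  replace (INR 2) with 2 in Habsorb by (simpl; lra).
  unfold k11, k12. rewrite Hpascal.
  set (c := INR (binom (N - 3) (2 * (i - 1)))) in *.
  set (d := INR (binom (N - 3) (2 * i - 3))) in *.
  set (F := INR (fact (2 * (i - 1)))).
  transitivity (2 * INR i * (- / 2 * F * (INR N - 2) * (INR N - 1 - 2 * INR i) * c)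
    - - / 2 * F * (INR N - 1 - 2 * INR i) * (INR N - 1) *
        ((2 * INR i - 2) * c - (INR N - 2 * INR i) * d)).
  - rewrite Habsorb. ring.
  - ring.
Qed.

Lemma pressure_lhs_of_constant_rates (N n : nat) (alpha : nat -> R) (a : R -> R) (t C : R) :
  (2 * n <= N)%nat ->
  Derive a t ^ 2 / a t ^ 2 + 1 / a t ^ 2 = C ->
  Derive (Derive a) t / a t = C ->
  pressure_lhs N n alpha a t =
    (INR N - 1) / 2 * C *
      (2 - INR N + sum_n_m (fun i => alpha i * k12 N i * C ^ (i - 1) / INR i) 2 n).
Proof.
  intros HN HH Hacc.
  unfold pressure_lhs; cbv zeta. rewrite HH, Hacc.
  rewrite (sum_n_m_ext_loc _ (fun i => mult ((INR N - 1) / 2 * C)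
      (alpha i * k12 N i * C ^ (i - 1) / INR i))).
  - rewrite sum_n_m_mult_l. unfold mult; simpl.
    set (S := sum_n_m (fun i => alpha i * k12 N i * C ^ (i - 1) / INR i) 2 n).
    (* [sum_n_m_mult_l] returns the sum over the monoid of [R_Ring], which [field]
       would otherwise treat as an atom distinct from [S]. *)
    replace (sum_n_m _ 2 n) with S by reflexivity.
    field.
  - intros i Hi. unfold mult; simpl.
    assert (Hi0 : 0 < INR i) by (apply lt_0_INR; lia).
    assert (Hk11 : k11 N i = (INR N - 1 - 2 * INR i) * k12 N i / (2 * INR i)).
    { rewrite <- k11_k12_relation by lia. field. lra. }
    replace (C ^ i) with (C * C ^ (i - 1))
      by (replace i with (S (i - 1)) at 2 by lia; reflexivity).
    rewrite Hk11. field. lra.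
Qed.

Lemma cosh_sq_sub_sinh_sq (x : R) : cosh x ^ 2 - sinh x ^ 2 = 1.
Proof.
  unfold cosh, sinh.
  assert (exp x * exp (- x) = 1) by (rewrite <- exp_plus, Rplus_opp_r; apply exp_0).
  nra.
Qed.

Lemma cosh_pos (x : R) : 0 < cosh x.
Proof. unfold cosh. pose proof (exp_pos x). pose proof (exp_pos (- x)). lra. Qed.

Lemma is_derive_cosh_scal (s x : R) :
  is_derive (fun u => cosh (s * u)) x (s * sinh (s * x)).
Proof.
  apply (is_derive_comp cosh (fun u => s * u) x (sinh (s * x)) s).
  - apply is_derive_Reals, derivable_pt_lim_cosh.
  - auto_derive; [exact I | ring].
Qed.

Lemma is_derive_sinh_scal (s x : R) :
  is_derive (fun u => sinh (s * u)) x (s * cosh (s * x)).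
Proof.
  apply (is_derive_comp sinh (fun u => s * u) x (cosh (s * x)) s).
  - apply is_derive_Reals, derivable_pt_lim_sinh.
  - auto_derive; [exact I | ring].
Qed.

Section CoshProfile.

Variable s : R.
Hypothesis s_pos : 0 < s.

Let a (t : R) : R := / s * cosh (s * t).

Lemma is_derive_cosh_profile (t : R) : is_derive a t (sinh (s * t)).
Proof.
  replace (sinh (s * t)) with (/ s * (s * sinh (s * t))) by (field; lra).
  apply (is_derive_scal (fun u => cosh (s * u))), is_derive_cosh_scal.
Qed.

Lemma Derive_cosh_profile : Derive a = fun t => sinh (s * t).
Proof.
  apply functional_extensionality. intro t.
  apply is_derive_unique, is_derive_cosh_profile.
Qed.

Lemma cosh_profile_hubble (t : R) :
  Derive a t ^ 2 / a t ^ 2 + 1 / a t ^ 2 = s ^ 2.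
Proof.
  rewrite Derive_cosh_profile. unfold a.
  pose proof (cosh_sq_sub_sinh_sq (s * t)). pose proof (cosh_pos (s * t)).
  replace (1 / (/ s * cosh (s * t)) ^ 2)
    with ((cosh (s * t) ^ 2 - sinh (s * t) ^ 2) / (/ s * cosh (s * t)) ^ 2)
    by (f_equal; lra).
  field. lra.
Qed.

Lemma cosh_profile_acceleration (t : R) : Derive (Derive a) t / a t = s ^ 2.
Proof.
  rewrite Derive_cosh_profile.
  replace (Derive _ t) with (s * cosh (s * t))
    by (symmetry; apply is_derive_unique, is_derive_sinh_scal).
  unfold a. pose proof (cosh_pos (s * t)). field. lra.
Qed.

End CoshProfile.

Theorem mainTheorem5 (n N : nat) (alpha : nat -> R) (C1 : R) :
  (2 <= n)%nat -> (2 * n + 1 <= N)%nat ->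
  0 < C1 ->
  2 - INR N + sum_n_m (fun i => alpha i * k12 N i * C1 ^ (i - 1) / INR i) 2 n = 0 ->
  let a := fun t : R => / sqrt C1 * cosh (sqrt C1 * t) in
  forall t : R,
    ex_derive a t /\ ex_derive (Derive a) t /\ pressure_lhs N n alpha a t = 0.
Proof.
  intros Hn HN HC1 Hroot a t.
  assert (Hs : 0 < sqrt C1) by (apply sqrt_lt_R0; lra).
  assert (Hs2 : sqrt C1 ^ 2 = C1) by (rewrite pow2_sqrt; lra).
  split; [| split].
  - eexists. apply (is_derive_cosh_profile _ Hs).
  - unfold a. rewrite (Derive_cosh_profile _ Hs).
    eexists. apply is_derive_sinh_scal.
  - rewrite (pressure_lhs_of_constant_rates N n alpha a t C1), Hroot.
    + ring.
    + lia.
    + rewrite <- Hs2. apply (cosh_profile_hubble _ Hs).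
    + rewrite <- Hs2. apply (cosh_profile_acceleration _ Hs).
Qed.
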